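(* The partial derivatives $(\omega_\pm)_x$ and $(\omega_\pm)_y$ are uniformly bounded on $R\setminus\{p_0\}$. For all $(x,y)\in R_\pm\setminus\{p_0\}$, $(\omega_\pm)_x(x,y)\ge 0$, with equality exactly when $y=0$. In any wedge $V_a$ (with $p_0$ removed), $(\omega_\pm)_x>1/120$. Furthermore, for $y\neq0$, $y\,(\omega_+)_y>0$ and $y\,(\omega_-)_y<0$.
   Context: For $x>0$, $y\in\mathbb{R}$ let $r_1^2=4+x^2+4x^2y^2$, $\Delta=((x+2)^2+8x^2y^2)((x-2)^2+8x^2y^2)$ and $$\omega_\pm(x,y)=\frac{x^2-4\pm\sqrt{\Delta}}{2r_1^2}.$$ Let $p_0=(2,0)$, $R=\{(x,y): x>0,\ 4-4y^2-x^2y^2-8x^2y^4\ge 0\}$, $R_+=R\cap((0,2]\times\mathbb{R})$, $R_-=R\cap([2,\infty)\times\mathbb{R})$. For $0<a\le 1/10$ the wedge of height $a$ is $V_a=\{(x,y): |y|\le a,\ |y|\ge|x-2|/10\}$. *)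

From Stdlib Require Import Reals Lra.
From Coquelicot Require Import Coquelicot.
Open Scope R_scope.

Definition r1sq (x y : R) : R := 4 + x^2 + 4 * x^2 * y^2.

Definition Delta (x y : R) : R :=
  ((x + 2)^2 + 8 * x^2 * y^2) * ((x - 2)^2 + 8 * x^2 * y^2).

Definition omega_plus (x y : R) : R := (x^2 - 4 + sqrt (Delta x y)) / (2 * r1sq x y).
Definition omega_minus (x y : R) : R := (x^2 - 4 - sqrt (Delta x y)) / (2 * r1sq x y).

(* partial derivatives (Coquelicot's total Derive; existence is stated separately) *)
Definition ex_partial_x (f : R -> R -> R) (x y : R) : Prop := ex_derive (fun t => f t y) x.
Definition ex_partial_y (f : R -> R -> R) (x y : R) : Prop := ex_derive (fun t => f x t) y.
Definition partial_x (f : R -> R -> R) (x y : R) : R := Derive (fun t => f t y) x.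
Definition partial_y (f : R -> R -> R) (x y : R) : R := Derive (fun t => f x t) y.

Definition is_p0 (x y : R) : Prop := x = 2 /\ y = 0.

Definition inR (x y : R) : Prop :=
  0 < x /\ 4 - 4 * y^2 - x^2 * y^2 - 8 * x^2 * y^4 >= 0.
Definition inRplus (x y : R) : Prop := inR x y /\ x <= 2.
Definition inRminus (x y : R) : Prop := inR x y /\ 2 <= x.

Definition inV (a x y : R) : Prop := Rabs y <= a /\ Rabs y >= Rabs (x - 2) / 10.

From Pilot Require Import Defs.
From Stdlib Require Import Reals Lra Psatz.
From Coquelicot Require Import Coquelicot.
Open Scope R_scope.

(* The values omega_+ and omega_- are the two roots of the quadratic
   q(w) = r_1^2 w^2 - (x^2 - 4) w - 4 x^2 y^2, whose discriminant is Delta, and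
   2 r_1^2 omega_+- - (x^2 - 4) = +- sqrt Delta.  Implicit differentiation of
   q(omega) = 0 gives
     sqrt Delta (omega_+-)_x = +- 2x (1 - omega_+-) L(omega_+-),   L(w) = (1 + 4y^2) w + 4y^2,
     sqrt Delta (omega_+-)_y = +- 8x^2 y (1 - omega_+-^2).
   The values q(0) <= 0 < q(1), q(-1) place the roots in -1 < omega_- <= 0 <= omega_+ < 1,
   and Vieta's formulas give r_1^2 L(omega_+) L(omega_-) = -16 y^2 and
   r_1^2 (L(omega_+) - L(omega_-)) = (1 + 4y^2) sqrt Delta, so L(omega_-) <= 0 <= L(omega_+).
   Every claim follows from these identities; in the wedge Delta = O(y^2), which
   bounds (omega_+-)_x from below. *)

(* Stdlib's Reals also export a [Delta]. *)
Local Notation Delta := Pilot.Defs.Delta.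

Lemma pow2_gt_0 (z : R) : z <> 0 -> 0 < z^2.
Proof. intro Hz. rewrite <- Rsqr_pow2. now apply Rsqr_pos_lt. Qed.

Lemma quadratic_factor (a b c w : R) : a <> 0 -> 0 <= b^2 + 4*a*c ->
  a * (w - (b + sqrt (b^2 + 4*a*c)) / (2*a)) * (w - (b - sqrt (b^2 + 4*a*c)) / (2*a))
  = a * w^2 - b * w - c.
Proof.
  intros Ha HD. pose proof (sqrt_sqrt _ HD) as HS.
  set (s := sqrt (b^2 + 4*a*c)) in *.
  transitivity (a * w^2 - b * w - c + (b^2 + 4*a*c - s*s) / (4*a)).
  - field. exact Ha.
  - rewrite HS. field. exact Ha.
Qed.

Lemma implicit_derive_quadratic (a b c w : R -> R) (x da db dc : R) :
  (forall t, a t * w t ^ 2 - b t * w t - c t = 0) -> ex_derive w x ->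
  is_derive a x da -> is_derive b x db -> is_derive c x dc ->
  Derive w x * (2 * a x * w x - b x) = db * w x + dc - da * w x ^ 2.
Proof.
  intros Hroot Hw Ha Hb Hc. apply Derive_correct in Hw.
  assert (Hlhs := is_derive_minus _ _ _ _ _
    (is_derive_minus _ _ _ _ _
      (is_derive_mult _ _ _ _ _ Ha (is_derive_pow _ 2 _ _ Hw) Rmult_comm)
      (is_derive_mult _ _ _ _ _ Hb Hw Rmult_comm)) Hc).
  assert (Hzero : is_derive (fun t => a t * w t ^ 2 - b t * w t - c t) x 0).
  { apply is_derive_ext with (f := fun _ => 0); [intro t; now rewrite Hroot|].
    apply (is_derive_const (V := R_NormedModule)). }
  pose proof (eq_trans (eq_sym (is_derive_unique _ _ _ Hlhs)) (is_derive_unique _ _ _ Hzero)) as E.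
  unfold plus, mult, minus, opp in E; simpl in E; unfold plus in E; cbn in E.
  lra.
Qed.

Definition omega_quad (x y w : R) : R :=
  r1sq x y * w^2 - (x^2 - 4) * w - 4 * x^2 * y^2.

Lemma r1sq_pos (x y : R) : 0 < r1sq x y.
Proof. unfold r1sq. pose proof (pow2_ge_0 x). pose proof (pow2_ge_0 (x*y)). nra. Qed.

Lemma Delta_discriminant (x y : R) :
  Delta x y = (x^2 - 4)^2 + 4 * r1sq x y * (4 * x^2 * y^2).
Proof. unfold Delta, r1sq. ring. Qed.

Lemma Delta_pos (x y : R) : 0 < x -> ~ is_p0 x y -> 0 < Delta x y.
Proof.
  intros Hx Hp. rewrite Delta_discriminant. pose proof (r1sq_pos x y) as Hr.
  destruct (Req_dec y 0) as [-> | Hy].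
  - assert (Hx2 : x^2 - 4 <> 0).
    { intro H0. apply Hp. split; [|reflexivity].
      assert (Hf : (x - 2) * (x + 2) = 0) by (rewrite <- H0; ring).
      apply Rmult_integral in Hf. lra. }
    pose proof (pow2_gt_0 _ Hx2). nra.
  - assert (0 < x^2 * y^2) by (apply Rmult_lt_0_compat; apply pow2_gt_0; lra).
    pose proof (pow2_ge_0 (x^2 - 4)). nra.
Qed.

Lemma omega_quad_factor (x y w : R) :
  omega_quad x y w = r1sq x y * (w - omega_plus x y) * (w - omega_minus x y).
Proof.
  unfold omega_quad, omega_plus, omega_minus. rewrite Delta_discriminant.
  symmetry. apply quadratic_factor.
  - apply Rgt_not_eq, r1sq_pos.
  - rewrite <- Delta_discriminant. unfold Delta.
    pose proof (pow2_ge_0 (x+2)). pose proof (pow2_ge_0 (x-2)). pose proof (pow2_ge_0 (x*y)).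
    apply Rmult_le_pos; nra.
Qed.

Lemma omega_plus_root (x y : R) : omega_quad x y (omega_plus x y) = 0.
Proof. rewrite omega_quad_factor. ring. Qed.

Lemma omega_minus_root (x y : R) : omega_quad x y (omega_minus x y) = 0.
Proof. rewrite omega_quad_factor. ring. Qed.

Lemma ex_partials_omega (x y : R) : 0 < x -> ~ is_p0 x y ->
  ex_partial_x omega_plus x y /\ ex_partial_y omega_plus x y /\
  ex_partial_x omega_minus x y /\ ex_partial_y omega_minus x y.
Proof.
  intros Hx Hp. pose proof (Delta_pos x y Hx Hp). pose proof (r1sq_pos x y).
  unfold ex_partial_x, ex_partial_y, omega_plus, omega_minus, Delta, r1sq in *.
  repeat split; auto_derive; repeat split; lra.
Qed.

Lemma partial_x_quad_root (f : R -> R -> R) (x y : R) :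
  (forall t, omega_quad t y (f t y) = 0) -> ex_partial_x f x y ->
  partial_x f x y * (2 * r1sq x y * f x y - (x^2 - 4)) =
  2 * x * (1 - f x y) * ((1 + 4*y^2) * f x y + 4*y^2).
Proof.
  intros Hroot Hex.
  assert (Ha : is_derive (fun t => r1sq t y) x (2*x + 8*x*y^2)) by (unfold r1sq; auto_derive; [auto|ring]).
  assert (Hb : is_derive (fun t => t^2 - 4) x (2*x)) by (auto_derive; [auto|ring]).
  assert (Hc : is_derive (fun t => 4 * t^2 * y^2) x (8*x*y^2)) by (auto_derive; [auto|ring]).
  unfold partial_x. rewrite (implicit_derive_quadratic _ _ _ _ _ _ _ _ Hroot Hex Ha Hb Hc).
  ring.
Qed.

Lemma partial_y_quad_root (f : R -> R -> R) (x y : R) :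
  (forall t, omega_quad x t (f x t) = 0) -> ex_partial_y f x y ->
  partial_y f x y * (2 * r1sq x y * f x y - (x^2 - 4)) = 8 * x^2 * y * (1 - f x y ^ 2).
Proof.
  intros Hroot Hex.
  assert (Ha : is_derive (fun t => r1sq x t) y (8*x^2*y)) by (unfold r1sq; auto_derive; [auto|ring]).
  assert (Hb : is_derive (fun _ => x^2 - 4) y 0) by (auto_derive; [auto|ring]).
  assert (Hc : is_derive (fun t => 4 * x^2 * t^2) y (8*x^2*y)) by (auto_derive; [auto|ring]).
  unfold partial_y. change (Derive (fun t => f x t) y) with (Derive (f x) y).
  rewrite (implicit_derive_quadratic _ _ _ _ _ _ _ _ Hroot Hex Ha Hb Hc).
  ring.
Qed.

Lemma r1sq_ge (x y : R) : y^2 <= 1 -> 4 * x * (1 + 4*y^2) <= 5 * r1sq x y.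
Proof.
  intro Hy. unfold r1sq. pose proof (pow2_ge_0 y). pose proof (pow2_ge_0 (5*x - 2)).
  assert (0 <= (1 + 4*y^2) * (5*x - 2)^2) by (apply Rmult_le_pos; lra).
  nra.
Qed.

Lemma Delta_ge (x y : R) : 16 * x^4 * y^2 <= Delta x y.
Proof.
  rewrite Delta_discriminant. unfold r1sq.
  pose proof (pow2_ge_0 (x^2 - 4)). pose proof (pow2_ge_0 (x*y)). pose proof (pow2_ge_0 (x^2*y)).
  nra.
Qed.

Section OmegaAtPoint.

Variables x y : R.

Local Notation r := (r1sq x y).
Local Notation s := (sqrt (Delta x y)).
Local Notation p := (omega_plus x y).
Local Notation m := (omega_minus x y).

Lemma omega_vieta_sum : r * (p + m) = x^2 - 4.
Proof. pose proof (r1sq_pos x y). unfold omega_plus, omega_minus. field. lra. Qed.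

Lemma omega_vieta_prod : r * p * m = - (4 * x^2 * y^2).
Proof.
  pose proof (omega_quad_factor x y 0) as E. unfold omega_quad in E.
  replace (r * p * m) with (r * (0 - p) * (0 - m)) by ring. rewrite <- E. ring.
Qed.

Lemma omega_plus_sqrt : 2 * r * p - (x^2 - 4) = s.
Proof. pose proof (r1sq_pos x y). unfold omega_plus. field. lra. Qed.

Lemma omega_minus_sqrt : 2 * r * m - (x^2 - 4) = - s.
Proof. pose proof (r1sq_pos x y). unfold omega_minus. field. lra. Qed.

Lemma omega_bounds : 0 < x -> 0 <= p < 1 /\ -1 < m <= 0.
Proof.
  intro Hx. pose proof (r1sq_pos x y) as Hr.
  assert (Hmp : m <= p).
  { pose proof (sqrt_pos (Delta x y)). pose proof omega_plus_sqrt. pose proof omega_minus_sqrt. nra. }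
  assert (H0 : r * p * m <= 0).
  { rewrite omega_vieta_prod. pose proof (pow2_ge_0 (x*y)). rewrite Rpow_mult_distr in *. lra. }
  assert (H1 : r * (1 - p) * (1 - m) = 8).
  { rewrite <- omega_quad_factor. unfold omega_quad, r1sq. ring. }
  assert (Hm1 : r * (-1 - p) * (-1 - m) = 2 * x^2).
  { rewrite <- omega_quad_factor. unfold omega_quad, r1sq. ring. }
  assert (0 < x^2) by (apply pow_lt; lra).
  assert (p * m <= 0) by nra.
  assert (m <= 0 <= p) by nra.
  assert (0 < (1 - p) * (1 - m)) by nra.
  assert (0 < (1 + p) * (1 + m)) by nra.
  split; split; try lra; nra.
Qed.

Local Notation lin w := ((1 + 4*y^2) * w + 4*y^2).

Lemma omega_lin_diff : r * (lin p - lin m) = (1 + 4*y^2) * s.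
Proof.
  pose proof omega_plus_sqrt. pose proof omega_minus_sqrt.
  replace (r * (lin p - lin m)) with ((1 + 4*y^2) * (r * p - r * m)) by ring.
  f_equal. lra.
Qed.

Lemma omega_lin_prod : r * lin p * lin m = - (16 * y^2).
Proof.
  transitivity ((1 + 4*y^2)^2 * (r * p * m) + 4*y^2 * (1 + 4*y^2) * (r * (p + m)) + 16*y^4 * r).
  - ring.
  - rewrite omega_vieta_prod, omega_vieta_sum. unfold r1sq. ring.
Qed.

Lemma omega_lin_signs : 0 <= lin p /\ lin m <= 0.
Proof.
  pose proof (r1sq_pos x y). pose proof (sqrt_pos (Delta x y)).
  pose proof omega_lin_diff. pose proof omega_lin_prod. pose proof (pow2_ge_0 y).
  assert (lin m <= lin p) by nra.
  assert (lin p * lin m <= 0) by nra.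
  split; nra.
Qed.

Lemma omega_lin_le : r * lin p <= (1 + 4*y^2) * s /\ - (r * lin m) <= (1 + 4*y^2) * s.
Proof.
  pose proof (r1sq_pos x y). pose proof omega_lin_diff. destruct omega_lin_signs.
  split; nra.
Qed.

Hypothesis x_pos : 0 < x.
Hypothesis not_p0 : ~ is_p0 x y.

Lemma sqrt_Delta_pos : 0 < s.
Proof. apply sqrt_lt_R0, Delta_pos; assumption. Qed.

Lemma sqrt_Delta_sqr : s * s = Delta x y.
Proof. apply sqrt_sqrt, Rlt_le, Delta_pos; assumption. Qed.

Let ex_partials := ex_partials_omega x y x_pos not_p0.

Lemma partial_x_omega_plus_eq : partial_x omega_plus x y * s = 2 * x * (1 - p) * lin p.
Proof.
  rewrite <- omega_plus_sqrt. apply (partial_x_quad_root omega_plus).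
  - intro t. apply omega_plus_root.
  - apply ex_partials.
Qed.

Lemma partial_x_omega_minus_eq : partial_x omega_minus x y * s = - (2 * x * (1 - m) * lin m).
Proof.
  assert (E : partial_x omega_minus x y * (2 * r * m - (x^2 - 4)) = 2 * x * (1 - m) * lin m).
  { apply (partial_x_quad_root omega_minus).
    - intro t. apply omega_minus_root.
    - apply ex_partials. }
  rewrite omega_minus_sqrt in E. lra.
Qed.

Lemma partial_y_omega_plus_eq : partial_y omega_plus x y * s = 8 * x^2 * y * (1 - p^2).
Proof.
  rewrite <- omega_plus_sqrt. apply (partial_y_quad_root omega_plus).
  - intro t. apply omega_plus_root.
  - apply ex_partials.
Qed.

Lemma partial_y_omega_minus_eq : partial_y omega_minus x y * s = - (8 * x^2 * y * (1 - m^2)).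
Proof.
  assert (E : partial_y omega_minus x y * (2 * r * m - (x^2 - 4)) = 8 * x^2 * y * (1 - m^2)).
  { apply (partial_y_quad_root omega_minus).
    - intro t. apply omega_minus_root.
    - apply ex_partials. }
  rewrite omega_minus_sqrt in E. lra.
Qed.

Lemma omega_plus_eq0 : x <= 2 -> y = 0 -> p = 0.
Proof.
  intros Hx2 Hy0. pose proof (r1sq_pos x y). destruct (omega_bounds x_pos).
  pose proof omega_vieta_sum.
  assert (Hprod : r * p * m = 0) by (rewrite omega_vieta_prod, Hy0; ring).
  assert (Hpm : p * m = 0) by nra.
  apply Rmult_integral in Hpm as [-> | Hm]; [reflexivity|].
  rewrite Hm in *. nra.
Qed.

Lemma omega_minus_eq0 : 2 <= x -> y = 0 -> m = 0.
Proof.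
  intros Hx2 Hy0. pose proof (r1sq_pos x y). destruct (omega_bounds x_pos).
  pose proof omega_vieta_sum.
  assert (Hprod : r * p * m = 0) by (rewrite omega_vieta_prod, Hy0; ring).
  assert (Hpm : p * m = 0) by nra.
  apply Rmult_integral in Hpm as [Hp | ->]; [|reflexivity].
  rewrite Hp in *. nra.
Qed.

Lemma partial_x_omega_plus_nonneg : 0 <= partial_x omega_plus x y.
Proof.
  pose proof sqrt_Delta_pos. pose proof partial_x_omega_plus_eq.
  destruct (omega_bounds x_pos). destruct omega_lin_signs.
  assert (0 <= 2 * x * (1 - p) * lin p) by (apply Rmult_le_pos; [nra|lra]).
  nra.
Qed.

Lemma partial_x_omega_minus_nonneg : 0 <= partial_x omega_minus x y.
Proof.
  pose proof sqrt_Delta_pos. pose proof partial_x_omega_minus_eq.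
  destruct (omega_bounds x_pos). destruct omega_lin_signs.
  assert (0 <= 2 * x * (1 - m) * - lin m) by (apply Rmult_le_pos; [nra|lra]).
  nra.
Qed.

Lemma partial_x_omega_plus_eq0_iff : x <= 2 -> (partial_x omega_plus x y = 0 <-> y = 0).
Proof.
  intro Hx2. pose proof sqrt_Delta_pos. pose proof partial_x_omega_plus_eq as E.
  destruct (omega_bounds x_pos). split.
  - intro Hd. rewrite Hd, Rmult_0_l in E.
    assert (Hlin : lin p = 0).
    { symmetry in E. apply Rmult_integral in E as [E|E]; [nra|exact E]. }
    pose proof omega_lin_prod as Hprod. rewrite Hlin in Hprod.
    destruct (Req_dec y 0) as [|Hy]; [assumption|].
    pose proof (pow2_gt_0 y Hy). lra.
  - intro Hy.
    assert (Hlin : lin p = 0) by (rewrite (omega_plus_eq0 Hx2 Hy), Hy; ring).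
    rewrite Hlin, Rmult_0_r in E. apply Rmult_integral in E as [E|E]; lra.
Qed.

Lemma partial_x_omega_minus_eq0_iff : 2 <= x -> (partial_x omega_minus x y = 0 <-> y = 0).
Proof.
  intro Hx2. pose proof sqrt_Delta_pos. pose proof partial_x_omega_minus_eq as E.
  destruct (omega_bounds x_pos). split.
  - intro Hd. rewrite Hd, Rmult_0_l in E.
    assert (Hlin : lin m = 0).
    { assert (Hm : 2 * x * (1 - m) * lin m = 0) by lra.
      apply Rmult_integral in Hm as [Hm|Hm]; [nra|exact Hm]. }
    pose proof omega_lin_prod as Hprod. rewrite Hlin in Hprod.
    destruct (Req_dec y 0) as [|Hy]; [assumption|].
    pose proof (pow2_gt_0 y Hy). lra.
  - intro Hy.
    assert (Hlin : lin m = 0) by (rewrite (omega_minus_eq0 Hx2 Hy), Hy; ring).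
    rewrite Hlin, Rmult_0_r, Ropp_0 in E. apply Rmult_integral in E as [E|E]; lra.
Qed.

Lemma y_partial_y_omega_plus_pos : y <> 0 -> 0 < y * partial_y omega_plus x y.
Proof.
  intro Hy. pose proof sqrt_Delta_pos. pose proof partial_y_omega_plus_eq.
  destruct (omega_bounds x_pos).
  assert (0 < 8 * (x^2 * y^2) * (1 - p^2)).
  { apply Rmult_lt_0_compat; [apply Rmult_lt_0_compat|]; [lra| |nra].
    apply Rmult_lt_0_compat; apply pow2_gt_0; lra. }
  nra.
Qed.

Lemma y_partial_y_omega_minus_neg : y <> 0 -> y * partial_y omega_minus x y < 0.
Proof.
  intro Hy. pose proof sqrt_Delta_pos. pose proof partial_y_omega_minus_eq.
  destruct (omega_bounds x_pos).
  assert (0 < 8 * (x^2 * y^2) * (1 - m^2)).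
  { apply Rmult_lt_0_compat; [apply Rmult_lt_0_compat|]; [lra| |nra].
    apply Rmult_lt_0_compat; apply pow2_gt_0; lra. }
  nra.
Qed.

Lemma partial_x_omega_plus_le : y^2 <= 1 -> partial_x omega_plus x y <= 5.
Proof.
  intro Hy. pose proof (r1sq_pos x y). pose proof sqrt_Delta_pos.
  pose proof partial_x_omega_plus_eq as E. pose proof (r1sq_ge x y Hy).
  destruct (omega_bounds x_pos). destruct omega_lin_signs. destruct omega_lin_le.
  assert (0 <= r * lin p) by (apply Rmult_le_pos; lra).
  assert (r * (partial_x omega_plus x y * s) <= 2 * x * ((1 + 4*y^2) * s)).
  { rewrite E. replace (r * (2 * x * (1 - p) * lin p)) with (2 * x * ((1 - p) * (r * lin p))) by ring.
    apply Rmult_le_compat_l; nra. }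
  apply (Rmult_le_reg_r s); [lra|]. apply (Rmult_le_reg_l r); [lra|]. nra.
Qed.

Lemma partial_x_omega_minus_le : y^2 <= 1 -> partial_x omega_minus x y <= 5.
Proof.
  intro Hy. pose proof (r1sq_pos x y). pose proof sqrt_Delta_pos.
  pose proof partial_x_omega_minus_eq as E. pose proof (r1sq_ge x y Hy).
  destruct (omega_bounds x_pos). destruct omega_lin_signs. destruct omega_lin_le.
  assert (0 <= - (r * lin m)) by nra.
  assert (r * (partial_x omega_minus x y * s) <= 4 * x * ((1 + 4*y^2) * s)).
  { assert ((1 - m) * - (r * lin m) <= 2 * ((1 + 4*y^2) * s)) by nra.
    rewrite E. replace (r * - (2 * x * (1 - m) * lin m)) with (2 * x * ((1 - m) * - (r * lin m))) by ring.
    replace (4 * x * ((1 + 4*y^2) * s)) with (2 * x * (2 * ((1 + 4*y^2) * s))) by ring.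
    apply Rmult_le_compat_l; lra. }
  apply (Rmult_le_reg_r s); [lra|]. apply (Rmult_le_reg_l r); [lra|]. nra.
Qed.

Lemma partial_y_omega_plus_sqr_le : (partial_y omega_plus x y)^2 <= 4.
Proof.
  pose proof sqrt_Delta_pos. pose proof partial_y_omega_plus_eq as E.
  pose proof (Delta_ge x y). pose proof sqrt_Delta_sqr.
  destruct (omega_bounds x_pos).
  assert (Hw : (1 - p^2)^2 <= 1) by (assert (0 <= 1 - p^2 <= 1) by nra; nra).
  assert (Hsq : (partial_y omega_plus x y * s)^2 <= 4 * (s * s)).
  { rewrite E. replace (((8 * x^2 * y * (1 - p^2)))^2) with (64 * (x^2 * y)^2 * (1 - p^2)^2) by ring.
    pose proof (pow2_ge_0 (x^2 * y)).
    assert (64 * (x^2 * y)^2 * (1 - p^2)^2 <= 64 * (x^2 * y)^2) by nra.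
    replace ((x^2 * y)^2) with (x^4 * y^2) in * by ring. lra. }
  replace ((partial_y omega_plus x y * s)^2) with ((partial_y omega_plus x y)^2 * (s * s)) in Hsq by ring.
  apply (Rmult_le_reg_r (s * s)); nra.
Qed.

Lemma partial_y_omega_minus_sqr_le : (partial_y omega_minus x y)^2 <= 4.
Proof.
  pose proof sqrt_Delta_pos. pose proof partial_y_omega_minus_eq as E.
  pose proof (Delta_ge x y). pose proof sqrt_Delta_sqr.
  destruct (omega_bounds x_pos).
  assert (Hw : (1 - m^2)^2 <= 1) by (assert (0 <= 1 - m^2 <= 1) by nra; nra).
  assert (Hsq : (partial_y omega_minus x y * s)^2 <= 4 * (s * s)).
  { rewrite E. replace ((-(8 * x^2 * y * (1 - m^2)))^2) with (64 * (x^2 * y)^2 * (1 - m^2)^2) by ring.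
    pose proof (pow2_ge_0 (x^2 * y)).
    assert (64 * (x^2 * y)^2 * (1 - m^2)^2 <= 64 * (x^2 * y)^2) by nra.
    replace ((x^2 * y)^2) with (x^4 * y^2) in * by ring. lra. }
  replace ((partial_y omega_minus x y * s)^2) with ((partial_y omega_minus x y)^2 * (s * s)) in Hsq by ring.
  apply (Rmult_le_reg_r (s * s)); nra.
Qed.

Lemma omega_plus_le_half : x^2 + 12 * x^2 * y^2 <= 12 -> p <= 1/2.
Proof.
  intro Hxy. pose proof (r1sq_pos x y). destruct (omega_bounds x_pos).
  assert (Hhalf : 0 <= r * (1/2 - p) * (1/2 - m)).
  { rewrite <- omega_quad_factor. unfold omega_quad, r1sq. lra. }
  assert (0 < r * (1/2 - m)) by (apply Rmult_lt_0_compat; lra).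
  replace (r * (1/2 - p) * (1/2 - m)) with ((1/2 - p) * (r * (1/2 - m))) in Hhalf by ring.
  nra.
Qed.

Lemma partial_x_omega_plus_ge :
  p <= 1/2 -> 16 * x * y^2 <= partial_x omega_plus x y * ((1 + 4*y^2) * Delta x y).
Proof.
  intro Hp. pose proof sqrt_Delta_pos. pose proof partial_x_omega_plus_eq as E.
  pose proof (pow2_ge_0 y). destruct omega_lin_signs.
  assert (0 <= x * lin p * (1 - 2 * p)) by (apply Rmult_le_pos; [apply Rmult_le_pos|]; lra).
  assert (Hd : x * lin p <= partial_x omega_plus x y * s) by (rewrite E; lra).
  assert (Hl : lin p * ((1 + 4*y^2) * s) = r * lin p ^ 2 + 16 * y^2).
  { rewrite <- omega_lin_diff. pose proof omega_lin_prod. lra. }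
  assert (16 * y^2 <= lin p * ((1 + 4*y^2) * s)).
  { rewrite Hl. pose proof (Rmult_le_pos _ _ (Rlt_le _ _ (r1sq_pos x y)) (pow2_ge_0 (lin p))). lra. }
  replace (partial_x omega_plus x y * ((1 + 4*y^2) * Delta x y))
    with ((partial_x omega_plus x y * s) * ((1 + 4*y^2) * s)).
  2: { transitivity (partial_x omega_plus x y * (1 + 4*y^2) * (s * s)); [ring|].
       rewrite sqrt_Delta_sqr. ring. }
  assert (0 <= (1 + 4*y^2) * s) by nra.
  nra.
Qed.

Lemma partial_x_omega_minus_ge :
  16 * x * y^2 <= partial_x omega_minus x y * ((1 + 4*y^2) * Delta x y).
Proof.
  pose proof sqrt_Delta_pos. pose proof partial_x_omega_minus_eq as E.
  pose proof (pow2_ge_0 y). destruct omega_lin_signs. destruct (omega_bounds x_pos).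
  assert (0 <= x * - lin m * (1 - 2 * m)) by (apply Rmult_le_pos; [apply Rmult_le_pos|]; lra).
  assert (Hd : x * - lin m <= partial_x omega_minus x y * s) by (rewrite E; lra).
  assert (Hl : - lin m * ((1 + 4*y^2) * s) = r * lin m ^ 2 + 16 * y^2).
  { rewrite <- omega_lin_diff. pose proof omega_lin_prod. lra. }
  assert (16 * y^2 <= - lin m * ((1 + 4*y^2) * s)).
  { rewrite Hl. pose proof (Rmult_le_pos _ _ (Rlt_le _ _ (r1sq_pos x y)) (pow2_ge_0 (lin m))). lra. }
  replace (partial_x omega_minus x y * ((1 + 4*y^2) * Delta x y))
    with ((partial_x omega_minus x y * s) * ((1 + 4*y^2) * s)).
  2: { transitivity (partial_x omega_minus x y * (1 + 4*y^2) * (s * s)); [ring|].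
       rewrite sqrt_Delta_sqr. ring. }
  assert (0 <= (1 + 4*y^2) * s) by nra.
  nra.
Qed.

End OmegaAtPoint.

Lemma wedge_Delta_lt (x y : R) :
  1 <= x <= 3 -> (x - 2)^2 <= 100 * y^2 -> 0 < y^2 <= 1/100 ->
  (1 + 4*y^2) * Delta x y < 1920 * x * y^2.
Proof.
  intros Hx Hxy Hy. unfold Delta.
  set (P := (x + 2)^2 + 8 * x^2 * y^2).
  assert (HP0 : 0 <= P) by (unfold P; pose proof (pow2_ge_0 (x+2)); pose proof (pow2_ge_0 (x*y)); nra).
  assert (HP : P <= 108/100 * x^2 + 4*x + 4) by (unfold P; nra).
  assert (HQ : (x - 2)^2 + 8 * x^2 * y^2 <= (100 + 8*x^2) * y^2) by nra.
  assert (H1 : (1 + 4*y^2) * P <= 104/100 * (108/100 * x^2 + 4*x + 4)) by (apply Rmult_le_compat; lra).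
  assert (H2 : 104/100 * (108/100 * x^2 + 4*x + 4) * (100 + 8*x^2) < 1920 * x).
  { assert (0 <= (x - 1) * (3 - x)) by nra. nra. }
  assert (H3 : (1 + 4*y^2) * P * (100 + 8*x^2) < 1920 * x).
  { assert (0 <= 100 + 8*x^2) by nra. nra. }
  assert (H4 : (1 + 4*y^2) * (P * ((x - 2)^2 + 8 * x^2 * y^2)) <= (1 + 4*y^2) * P * ((100 + 8*x^2) * y^2)).
  { rewrite <- Rmult_assoc. apply Rmult_le_compat_l; [nra|lra]. }
  nra.
Qed.

Lemma inV_wedge (a x y : R) : a <= 1/10 -> inV a x y -> ~ is_p0 x y ->
  1 <= x <= 3 /\ (x - 2)^2 <= 100 * y^2 /\ 0 < y^2 <= 1/100.
Proof.
  intros Ha [Hya Hyx] Hp. unfold Rdiv in Hyx.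
  pose proof (Rabs_pos y). pose proof (Rabs_pos (x - 2)).
  pose proof (Rle_abs (x - 2)). pose proof (Rle_abs (- (x - 2))). rewrite Rabs_Ropp in *.
  assert (Hy : y <> 0).
  { intro Hy0. apply Hp. split; [|exact Hy0].
    rewrite Hy0, Rabs_R0 in Hyx. lra. }
  pose proof (Rabs_pos_lt y Hy).
  rewrite <- (pow2_abs (x - 2)), <- (pow2_abs y).
  repeat split; nra.
Qed.

Lemma partial_x_omega_wedge (a x y : R) : a <= 1/10 -> inV a x y -> ~ is_p0 x y ->
  partial_x omega_plus x y > 1/120 /\ partial_x omega_minus x y > 1/120.
Proof.
  intros Ha HV Hp. destruct (inV_wedge a x y Ha HV Hp) as (Hx & Hxy & Hy).
  pose proof (wedge_Delta_lt x y Hx Hxy Hy) as W.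
  assert (Hx0 : 0 < x) by lra.
  assert (Hhalf : omega_plus x y <= 1/2) by (apply omega_plus_le_half; auto; nra).
  pose proof (partial_x_omega_plus_ge x y Hx0 Hp Hhalf).
  pose proof (partial_x_omega_minus_ge x y Hx0 Hp).
  assert (0 < (1 + 4*y^2) * Delta x y) by (pose proof (Delta_pos x y Hx0 Hp); nra).
  split; nra.
Qed.

Lemma inR_y_sqr_le (x y : R) : inR x y -> y^2 <= 1.
Proof.
  intros [Hx HR]. pose proof (pow2_ge_0 (x*y)). pose proof (pow2_ge_0 (x*y^2)). nra.
Qed.

Lemma partials_omega_bounded (x y : R) : inR x y -> ~ is_p0 x y ->
  Rabs (partial_x omega_plus x y) <= 5 /\ Rabs (partial_y omega_plus x y) <= 5 /\
  Rabs (partial_x omega_minus x y) <= 5 /\ Rabs (partial_y omega_minus x y) <= 5.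
Proof.
  intros HR Hp. pose proof (inR_y_sqr_le x y HR) as Hy. destruct HR as [Hx _].
  pose proof (partial_x_omega_plus_nonneg x y Hx Hp).
  pose proof (partial_x_omega_minus_nonneg x y Hx Hp).
  pose proof (partial_x_omega_plus_le x y Hx Hp Hy).
  pose proof (partial_x_omega_minus_le x y Hx Hp Hy).
  pose proof (partial_y_omega_plus_sqr_le x y Hx Hp).
  pose proof (partial_y_omega_minus_sqr_le x y Hx Hp).
  repeat split; apply Rabs_le; nra.
Qed.

Theorem lemma4p2 :
  (exists M : R, forall x y : R, inR x y -> ~ is_p0 x y ->
     ex_partial_x omega_plus x y /\ ex_partial_y omega_plus x y /\
     ex_partial_x omega_minus x y /\ ex_partial_y omega_minus x y /\
     Rabs (partial_x omega_plus x y) <= M /\ Rabs (partial_y omega_plus x y) <= M /\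
     Rabs (partial_x omega_minus x y) <= M /\ Rabs (partial_y omega_minus x y) <= M)
  /\
  (forall x y : R, inRplus x y -> ~ is_p0 x y ->
     0 <= partial_x omega_plus x y /\ (partial_x omega_plus x y = 0 <-> y = 0))
  /\
  (forall x y : R, inRminus x y -> ~ is_p0 x y ->
     0 <= partial_x omega_minus x y /\ (partial_x omega_minus x y = 0 <-> y = 0))
  /\
  (forall a x y : R, 0 < a -> a <= 1/10 -> inV a x y -> ~ is_p0 x y ->
     partial_x omega_plus x y > 1/120 /\ partial_x omega_minus x y > 1/120)
  /\
  (forall x y : R, 0 < x -> y <> 0 ->
     y * partial_y omega_plus x y > 0 /\ y * partial_y omega_minus x y < 0).
Proof.
  split; [|split; [|split; [|split]]].
  - exists 5. intros x y HR Hp.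
    pose proof (ex_partials_omega x y (proj1 HR) Hp).
    pose proof (partials_omega_bounded x y HR Hp).
    tauto.
  - intros x y [[Hx _] Hx2] Hp. split.
    + now apply partial_x_omega_plus_nonneg.
    + now apply partial_x_omega_plus_eq0_iff.
  - intros x y [[Hx _] Hx2] Hp. split.
    + now apply partial_x_omega_minus_nonneg.
    + now apply partial_x_omega_minus_eq0_iff.
  - intros a x y _ Ha HV Hp. now apply (partial_x_omega_wedge a).
  - intros x y Hx Hy.
    assert (Hp : ~ is_p0 x y) by (intros [_ Hy0]; contradiction).
    split.
    + now apply Rlt_gt, y_partial_y_omega_plus_pos.
    + now apply y_partial_y_omega_minus_neg.
Qed.
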